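(* Let $n\ge 2$ and let $\mathbf{x}=(x_1,\dots,x_n)\in\mathbb{R}^n$ be a vector whose entries are either all strictly positive or all strictly negative. Let $M$ be either $M=\mathbf{x}^T\mathbf{x}$ (a positive rank one matrix) or $M=-\mathbf{x}^T\mathbf{x}$ (a negative rank one matrix), and assume the off-diagonal entries $M_{ij}$, $i<j$, are pairwise distinct. Then for every $k>0$ and every $t\in[0,1]$, the $k$-th Betti curve of $M$ satisfies $\beta_k(t)=0$.
   Context: Betti curves of a symmetric matrix. Let $M$ be a real symmetric $n\times n$ matrix whose $\binom{n}{2}$ off-diagonal entries $M_{ij}$ ($i<j$) are pairwise distinct. The ordering matrix $\widehat{M}$ is defined by $\widehat{M}_{ij}=k$ if $M_{ij}$ is the $k$-th smallest off-diagonal entry. For $t\in[0,1]$, $G_t=G_t(M)$ is the graph on vertex set $\{1,\dots,n\}$ with edge set $\{\{i,j\} : \widehat{M}_{ij}\le t\binom{n}{2}\}$ (so edges are added in increasing order of the entries $M_{ij}$; $G_0$ has no edges and $G_1$ is complete). $X(G_t)$ is the clique complex of $G_t$ (every $k$-clique of $G_t$ is filled in by a $(k-1)$-dimensional simplex). The $i$-th Betti curve of $M$ is $\beta_i(t)=\operatorname{rank} H_i(X(G_t);\mathbf{k})$, with $H_i$ simplicial homology with coefficients in a fixed field $\mathbf{k}$. Here $\mathbf{x}$ is a row vector, so $\mathbf{x}^T\mathbf{x}$ is the $n\times n$ matrix with entries $x_ix_j$. *)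

From HB Require Import structures.
From mathcomp Require Import all_boot all_order all_algebra.
From mathcomp Require Import reals.
Set Implicit Arguments. Unset Strict Implicit. Unset Printing Implicit Defensive.
Import Order.TTheory GRing.Theory Num.Theory.
Local Open Scope ring_scope.

Section Betti.
Variable R : realType.
Variable n : nat.

(* ordering matrix: hatM M i j = number of off-diagonal entries M_ab (a<b)
   that are <= M_ij; with pairwise distinct entries this is k when M_ij is
   the k-th smallest off-diagonal entry. *)
Definition hatM (M : 'M[R]_n) (i j : 'I_n) : nat :=
  #|[set p : 'I_n * 'I_n | (p.1 < p.2)%N && (M p.1 p.2 <= M i j)]|.

Definition Gt_edge (M : 'M[R]_n) (t : R) (i j : 'I_n) : bool :=
  (i != j) && ((hatM M i j)%:R <= t * ('C(n, 2))%:R).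

Definition clique_simplex (M : 'M[R]_n) (t : R) (s : {set 'I_n}) : bool :=
  (s != set0) && [forall i in s, forall j in s, (i != j) ==> Gt_edge M t i j].

Definition NS := #|{: {set 'I_n}}|.
Definition sx (a : 'I_NS) : {set 'I_n} := enum_val a.

Variable F : fieldType.

(* matrix (row-vector convention: chains are row vectors, c |-> c *m bd k)
   of the simplicial boundary map  C_k -> C_{k-1}, on the basis of all
   subsets of vertices; a k-simplex s = {v_0 < ... < v_k} is sent to
   \sum_l (-1)^l (s minus v_l).  Non-simplices give zero rows/columns. *)
Definition bd (M : 'M[R]_n) (t : R) (k : nat) : 'M[F]_NS :=
  \matrix_(a, b)
    if [&& clique_simplex M t (sx a), clique_simplex M t (sx b)
         & #|sx a| == k.+1]
    then \sum_(v in sx a | sx b == sx a :\ v)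
           (-1) ^+ #|[set u in sx a | (u < v)%N]|
    else 0.

(* coordinate subspace C_k of k-chains (spanned by the k-simplices) *)
Definition chains (M : 'M[R]_n) (t : R) (k : nat) : 'M[F]_NS :=
  \matrix_(a, b)
    if [&& a == b, clique_simplex M t (sx a) & #|sx a| == k.+1]
    then 1 else 0.

(* beta_k(t) = dim H_k(X(G_t); F) = dim (ker d_k on C_k) - dim (im d_{k+1}) *)
Definition betti (M : 'M[R]_n) (t : R) (k : nat) : nat :=
  (\rank (chains M t k :&: kermx (bd M t k))%MS - \rank (bd M t k.+1))%N.

End Betti.

(* If M = +-x^T x with x of constant sign, then M_ij = c x_i x_j for
   c = +-1, so one vertex a0 (the one minimising c e x_j, where e is the sign
   of x) satisfies M_{a0 i} <= M_{j i} for all i, j.  Since edges of G_t are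
   added in increasing order of the entries, every edge {i,j} of G_t with
   i <> a0 forces the edge {a0,i}: every clique of size >= 2 stays a clique
   after adding a0, i.e. X(G_t) is a cone with apex a0 in positive degrees.
   The cone operator h(s) = (-1)^{#{u in s | u < a0}} (a0 + s) (for a0 not in
   s) is then a chain homotopy: h d + d h = id on k-chains for k > 0, so every
   k-cycle z satisfies z = d(h z) and beta_k(t) = 0. *)

From HB Require Import structures.
From mathcomp Require Import all_boot all_order all_algebra.
From mathcomp Require Import reals ring.
Import Order.TTheory GRing.Theory Num.Theory.
Set Implicit Arguments. Unset Strict Implicit. Unset Printing Implicit Defensive.
Local Open Scope ring_scope.

Section FacetSets.
Variable T : finType.
Implicit Types (a v w : T) (s X Y : {set T}).

Lemma setD1U1 a v X : v != a -> (a |: X) :\ v = a |: (X :\ v).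
Proof.
move=> va; apply/setP=> u; rewrite !inE.
by case: (eqVneq u a) => [->|] //=; rewrite eq_sym va.
Qed.

Lemma eq_setU1 a X Y : a \in Y -> a \notin X -> (Y == a |: X) = (Y :\ a == X).
Proof.
move=> aY aX; apply/eqP/eqP => [->|<-]; first by rewrite setU1K.
by rewrite setD1K.
Qed.

Lemma eq_setD1 s v w : v \in s -> w \in s -> (s :\ w == s :\ v) = (v == w).
Proof.
move=> vs ws; apply/eqP/eqP => [Dvw|->] //; apply/eqP; apply: contraT => vw.
have : v \in s :\ w by rewrite !inE vw vs.
by rewrite Dvw setD11.
Qed.

End FacetSets.

Section Sign.
Variables (F : fieldType) (n : nat).
Implicit Types (a v w : 'I_n) (X : {set 'I_n}).

(* The boundary sign of v in X: d X = \sum_(v in X) eps v X (X :\ v). *)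
Definition eps v X : F := (-1) ^+ #|[set u in X | (u < v)%N]|.

Lemma epsU v w X : w \notin X ->
  eps v (w |: X) = (if (w < v)%N then -1 else 1) * eps v X.
Proof.
move=> wX; rewrite /eps.
have -> : [set u in w |: X | (u < v)%N] =
    if (w < v)%N then w |: [set u in X | (u < v)%N] else [set u in X | (u < v)%N].
  apply/setP=> u; rewrite !inE; case: ifP => wv; rewrite ?inE;
  by case: (eqVneq u w) => [->|]; rewrite ?wv ?andbF ?orbF.
case: ifP => _; last by rewrite mul1r.
by rewrite cardsU1 inE (negPf wX) exprS.
Qed.

Lemma eps_sq v X : eps v X * eps v X = 1.
Proof. by rewrite -expr2 -exprM mulnC exprM sqrrN !expr1n. Qed.

Lemma eps_self v X : v \notin X -> eps v (v |: X) = eps v X.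
Proof. by move=> vX; rewrite epsU // ltnn mul1r. Qed.

(* The sign identity making the two face terms of h d + d h cancel. *)
Lemma eps_swap a v X : v \in X -> a \notin X ->
  eps a X * eps v (a |: X) = - (eps v X * eps a (X :\ v)).
Proof.
move=> vX aX; have va : v != a by apply: contraNneq aX => <-.
rewrite epsU // -{1}(setD1K vX) epsU ?setD11 //.
by case: (ltngtP v a) => [_|_|/val_inj vEa]; [ring|ring|rewrite vEa eqxx in va].
Qed.

End Sign.

Section ConeHomotopy.
Variables (R : realType) (F : fieldType) (n : nat) (M : 'M[R]_n) (t : R).
Variable a0 : 'I_n.
Hypothesis cone_edge : forall i j, Gt_edge M t i j -> i != a0 ->
  Gt_edge M t a0 i && Gt_edge M t i a0.

Local Notation simplex := (clique_simplex M t).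
Implicit Types (s T : {set 'I_n}) (a b c : 'I_(NS n)).

Lemma simplex_sub s T : simplex s -> T \subset s -> T != set0 -> simplex T.
Proof.
move=> /andP[_ /forall_inP cl] sub T0; apply/andP; split=> //.
apply/forall_inP=> i iT; apply/forall_inP=> j jT.
exact: (forall_inP (cl i (subsetP sub i iT)) j (subsetP sub j jT)).
Qed.

Lemma facet_neq0 s k v : (0 < k)%N -> #|s| = k.+1 -> v \in s -> s :\ v != set0.
Proof. by move=> k0 sk vs; rewrite -card_gt0; move: (cardsD1 v s); rewrite vs sk add1n => -[<-]. Qed.

Lemma cone_simplex s : simplex s -> (2 <= #|s|)%N -> simplex (a0 |: s).
Proof.
move=> /andP[s0 /forall_inP cl] s2; apply/andP; split.
  by apply/set0Pn; exists a0; rewrite setU11.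
have clE i j : i \in s -> j \in s -> i != j -> Gt_edge M t i j.
  by move=> iS jS; apply/implyP; exact: (forall_inP (cl i iS) j jS).
have apex j : j \in s -> j != a0 -> Gt_edge M t a0 j && Gt_edge M t j a0.
  move=> jS ja; have : (0 < #|s :\ j|)%N by rewrite (cardsD1 j) jS in s2.
  rewrite card_gt0 => /set0Pn[j']; rewrite !inE => /andP[j'j j's].
  have jj' : Gt_edge M t j j' by apply: clE; rewrite // eq_sym.
  exact: cone_edge jj' ja.
apply/forall_inP=> i /setU1P[->|iS]; apply/forall_inP=> j /setU1P[->|jS];
  apply/implyP=> ij.
- by rewrite eqxx in ij.
- by rewrite eq_sym in ij; case/andP: (apex j jS ij).
- by case/andP: (apex i iS ij).
- exact: clE.
Qed.

Definition bd_coef k s T : F :=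
  if [&& simplex s, simplex T & #|s| == k.+1]
  then \sum_(v in s | T == s :\ v) eps F v s else 0.

Lemma bdE k a b : bd F M t k a b = bd_coef k (sx a) (sx b).
Proof. by rewrite mxE. Qed.

Lemma bd_coef_simplex k s T : (0 < k)%N -> simplex s -> #|s| = k.+1 ->
  bd_coef k s T = \sum_(v in s | T == s :\ v) eps F v s.
Proof.
move=> k0 ss sk; rewrite /bd_coef ss sk eqxx andbT.
case: (boolP (simplex T)) => // nT; rewrite big_pred0 // => v.
apply: contraNF nT => /andP[vs /eqP ->].
exact: simplex_sub ss (subsetDl _ _) (facet_neq0 k0 sk vs).
Qed.

(* Homotopy identity (h d + d h)(s) = s on a k-simplex s containing the apex:
   only the facet opposite a0 survives in h(d s). *)
Lemma homotopy_apex k s T : (0 < k)%N -> simplex s -> #|s| = k.+1 -> a0 \in s ->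
  (if a0 \in T then bd_coef k s (T :\ a0) * eps F a0 (T :\ a0) else 0) = (s == T)%:R.
Proof.
move=> k0 ss sk a0s; case: (boolP (a0 \in T)) => [a0T|a0T]; last first.
  by case: eqP => // sT; rewrite -sT a0s in a0T.
rewrite bd_coef_simplex //; case: (eqVneq s T) => [<-|sT].
  rewrite (big_pred1 a0) => [|v]; last first.
    case: (boolP (v \in s)) => vs /=; first by rewrite eq_setD1.
    by apply/esym/eqP => vEa; rewrite vEa a0s in vs.
  by rewrite -{1}(setD1K a0s) eps_self ?setD11 // eps_sq.
rewrite big_pred0 ?mul0r // => v; case: (boolP (v \in s)) => //= vs.
apply/negbTE/eqP => TEs; case: (eqVneq v a0) => [va|va].
  by move: sT; rewrite -(setD1K a0s) -(setD1K a0T) TEs va eqxx.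
by have := setD11 a0 T; rewrite TEs !inE eq_sym va a0s.
Qed.

(* Homotopy identity on a k-simplex s not containing the apex: d(h s) contributes
   s itself plus the cones over the facets of s, which cancel with h(d s). *)
Lemma homotopy_base k s T : (0 < k)%N -> simplex s -> #|s| = k.+1 -> a0 \notin s ->
  eps F a0 s * bd_coef k.+1 (a0 |: s) T
  + (if a0 \in T then bd_coef k s (T :\ a0) * eps F a0 (T :\ a0) else 0)
  = (s == T)%:R.
Proof.
move=> k0 ss sk a0s.
have sa : simplex (a0 |: s) by apply: cone_simplex; rewrite // sk.
have ska : #|a0 |: s| = k.+2 by rewrite cardsU1 a0s sk.
have a0D v : a0 \notin s :\ v by rewrite !inE negb_and a0s orbT.
have faceE v : v \in s -> (T == (a0 |: s) :\ v) = (T == a0 |: (s :\ v)).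
  by move=> vs; rewrite setD1U1 //; apply: contraNneq a0s => <-.
pose face_sum (g : 'I_n -> F) := \sum_(v in s) (if T == a0 |: (s :\ v) then g v else 0).
have coneE : bd_coef k.+1 (a0 |: s) T =
    (T == s)%:R * eps F a0 s + face_sum (fun v => eps F v (a0 |: s)).
  rewrite bd_coef_simplex // big_mkcondr big_setU1 //= setU1K // eps_self //.
  by congr (_ + _); [case: eqP; rewrite (mul1r, mul0r) | apply: eq_bigr => v /faceE ->].
have baseE : (if a0 \in T then bd_coef k s (T :\ a0) * eps F a0 (T :\ a0) else 0) =
    face_sum (fun v => eps F v s * eps F a0 (s :\ v)).
  case: ifP => a0T; last first.
    by rewrite /face_sum big1 // => v _; case: eqP => // TE; rewrite TE setU11 in a0T.
  rewrite bd_coef_simplex // big_mkcondr mulr_suml; apply: eq_bigr => v _.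
  rewrite eq_setU1 //; case: eqP => [->|_]; by rewrite ?mul0r.
rewrite coneE baseE mulrDr mulrCA eps_sq mulr1 eq_sym mulr_sumr -addrA -big_split /=.
rewrite big1 ?addr0 // => v vs.
by case: ifP; rewrite ?mulr0 ?addr0 // eps_swap // addNr.
Qed.

Definition cone_mx : 'M[F]_(NS n) :=
  \matrix_(a, b) if (a0 \notin sx a) && (sx b == a0 |: sx a) then eps F a0 (sx a) else 0.

Lemma sum_sx_eq (g : {set 'I_n} -> F) s :
  \sum_(b : 'I_(NS n)) (if sx b == s then g (sx b) else 0) = g s.
Proof.
rewrite (bigD1 (enum_rank s)) //= /sx enum_rankK eqxx big1 ?addr0 // => b nb.
by rewrite ifF //; apply: contraNF nb => /eqP <-; rewrite enum_valK.
Qed.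

Lemma cone_bdE k a c : (cone_mx *m bd F M t k) a c =
  if a0 \notin sx a then eps F a0 (sx a) * bd_coef k (a0 |: sx a) (sx c) else 0.
Proof.
rewrite mxE -(sum_sx_eq (fun X => if a0 \notin sx a
  then eps F a0 (sx a) * bd_coef k X (sx c) else 0)).
apply: eq_bigr => b _; rewrite bdE mxE.
by case: (a0 \notin sx a); case: eqP; rewrite ?mul0r.
Qed.

Lemma bd_coneE k a c : (bd F M t k *m cone_mx) a c =
  if a0 \in sx c then bd_coef k (sx a) (sx c :\ a0) * eps F a0 (sx c :\ a0) else 0.
Proof.
rewrite mxE -(sum_sx_eq (fun X => if a0 \in sx c
  then bd_coef k (sx a) X * eps F a0 X else 0) (sx c :\ a0)).
apply: eq_bigr => b _; rewrite bdE mxE.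
case: (boolP (a0 \in sx b)) => /= a0b.
  rewrite mulr0; case: ifP => // /eqP bE; move: a0b; rewrite bE.
  by case: ifP => //; rewrite setD11.
case: (boolP (a0 \in sx c)) => a0c; last first.
  case: eqP => [cE|_]; first by rewrite cE setU11 in a0c.
  by rewrite mulr0; case: ifP.
by rewrite eq_setU1 // [sx c :\ a0 == _]eq_sym; case: eqP => [->|]; rewrite ?mulr0.
Qed.

Lemma sx_inj : injective (@sx n).
Proof. exact: enum_val_inj. Qed.

Lemma cone_homotopy k a c : (0 < k)%N -> simplex (sx a) -> #|sx a| = k.+1 ->
  (cone_mx *m bd F M t k.+1 + bd F M t k *m cone_mx) a c = (a == c)%:R.
Proof.
move=> k0 sa ka; rewrite mxE cone_bdE bd_coneE -(inj_eq sx_inj).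
case: (boolP (a0 \in sx a)) => a0a /=; last exact: homotopy_base.
by rewrite add0r; exact: homotopy_apex.
Qed.

Lemma cycle_is_boundary k (u : 'rV[F]_(NS n)) : (0 < k)%N ->
  (forall a, u 0 a != 0 -> simplex (sx a) && (#|sx a| == k.+1)) ->
  u *m bd F M t k = 0 -> u *m cone_mx *m bd F M t k.+1 = u.
Proof.
move=> k0 u_chain u_cycle.
suff : u *m (cone_mx *m bd F M t k.+1 + bd F M t k *m cone_mx) = u.
  by rewrite mulmxDr !mulmxA u_cycle mul0mx addr0.
apply/rowP => c; rewrite mxE (bigD1 c) //= big1 => [|a ac].
  case: (eqVneq (u 0 c) 0) => [->|uc]; first by rewrite mul0r addr0.
  by case/andP: (u_chain c uc) => sc /eqP kc; rewrite cone_homotopy // eqxx mulr1 addr0.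
case: (eqVneq (u 0 a) 0) => [->|ua]; first by rewrite mul0r.
by case/andP: (u_chain a ua) => sa /eqP ka; rewrite cone_homotopy // (negPf ac) mulr0.
Qed.

Lemma betti_vanish k : (0 < k)%N -> betti F M t k = 0%N.
Proof.
move=> k0; apply/eqP; rewrite /betti subn_eq0; apply: mxrankS.
apply/row_subP => i; set z := row i _.
have z_chain : (z <= chains F M t k)%MS.
  exact: submx_trans (row_sub i _) (capmxSl _ _).
have z_cycle : z *m bd F M t k = 0.
  by apply/eqP; rewrite -sub_kermx; exact: submx_trans (row_sub i _) (capmxSr _ _).
case/submxP: z_chain => D zD.
rewrite -(@cycle_is_boundary k z) ?submxMl // => a.
rewrite zD mxE (bigD1 a) //= big1 ?addr0 => [|b ba]; last by rewrite mxE (negPf ba) mulr0.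
by rewrite mxE eqxx /=; case: ifP => //; rewrite mulr0 eqxx.
Qed.

End ConeHomotopy.

Lemma hatM_mono (R : realType) n (M : 'M[R]_n) i j i' j' :
  M i' j' <= M i j -> (hatM M i' j' <= hatM M i j)%N.
Proof.
move=> le_ij; apply: subset_leq_card; apply/subsetP => p; rewrite !inE.
by case/andP=> -> le_p; exact: le_trans le_p le_ij.
Qed.

Lemma minimal_vertex_cone (R : realType) n (M : 'M[R]_n) t a0 :
  (forall i j, M i j = M j i) -> (forall i j, M a0 i <= M j i) ->
  forall i j, Gt_edge M t i j -> i != a0 -> Gt_edge M t a0 i && Gt_edge M t i a0.
Proof.
move=> Msym Mmin i j /andP[_ le_ij] ia.
have le_a0i : (hatM M a0 i <= hatM M i j)%N by apply: hatM_mono; rewrite (Msym i j).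
have le_ia0 : (hatM M i a0 <= hatM M i j)%N by apply: hatM_mono; rewrite (Msym i a0) (Msym i j).
by rewrite /Gt_edge eq_sym ia /= !(le_trans _ le_ij) // ler_nat.
Qed.

Lemma rank_one_minimal_vertex (R : realType) n (x : 'rV[R]_n) (M : 'M[R]_n) (i0 : 'I_n) :
  (forall i, 0 < x 0 i) \/ (forall i, x 0 i < 0) ->
  M = x^T *m x \/ M = - (x^T *m x) ->
  (forall i j, M i j = M j i) /\ exists a0, forall i j, M a0 i <= M j i.
Proof.
move=> hx hM.
have [e [e2 ex]] : exists e : R, e * e = 1 /\ forall i, 0 < e * x 0 i.
  case: hx => hx; [exists 1 | exists (-1)]; split=> [|i].
  - by rewrite mul1r.
  - by rewrite mul1r.
  - by rewrite mulrNN mul1r.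
  - by rewrite mulN1r oppr_gt0.
have [c Mc] : exists c : R, forall i j, M i j = c * (x 0 i * x 0 j).
  have xxE i j : (x^T *m x) i j = x 0 i * x 0 j by rewrite mxE big_ord1 !mxE.
  case: hM => ->; [exists 1 | exists (-1)] => i j.
  - by rewrite xxE mul1r.
  - by rewrite mxE xxE mulN1r.
split=> [i j|]; first by rewrite !Mc (mulrC (x 0 i)).
case: (arg_minP (i0:=i0) (P:=xpredT) (fun j => c * e * x 0 j) (erefl true)) => a0 _ a0min.
exists a0 => i j; rewrite !Mc.
have factor k : c * (x 0 k * x 0 i) = (c * e * x 0 k) * (e * x 0 i).
  by rewrite -[LHS]mulr1 -e2; ring.
by rewrite !factor; apply: ler_wpM2r; [exact: ltW | exact: a0min].
Qed.

Theorem theorem1 (R : realType) (F : fieldType) (n : nat) (hn : (2 <= n)%N)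
  (x : 'rV[R]_n)
  (hx : (forall i, 0 < x 0 i) \/ (forall i, x 0 i < 0))
  (M : 'M[R]_n)
  (hM : M = x^T *m x \/ M = - (x^T *m x))
  (hdist : forall i j i' j' : 'I_n, (i < j)%N -> (i' < j')%N ->
           M i j = M i' j' -> i = i' /\ j = j') :
  forall (k : nat), (0 < k)%N -> forall t : R, 0 <= t <= 1 ->
    betti F M t k = 0%N.
Proof.
move=> k k0 t _.
have i0 : 'I_n := Ordinal (leq_trans (isT : 0 < 2)%N hn).
have [Msym [a0 a0min]] := rank_one_minimal_vertex i0 hx hM.
exact: (betti_vanish F (minimal_vertex_cone (t := t) Msym a0min) k0).
Qed.
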